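(* Let $N\ge 1$ and let $J$ be a persymmetric Jacobi matrix of order $N+1$ that realizes perfect state transfer, with eigenvalues $\lambda_0<\lambda_1<\dots<\lambda_N$ satisfying \[\lambda_1-\lambda_0=\lambda_2-\lambda_1=\dots=\lambda_N-\lambda_{N-1}.\] Then $J$ does not have Early State Exclusion: if $T_0$ is the earliest positive time at which $J$ realizes perfect state transfer, there is no $t\in(0,T_0)$ with $(e^{-iJt}\mathbf{e}_0,\mathbf{e}_0)_{\mathbb{C}^{N+1}}=0$.
   Context: A Jacobi matrix of order $N+1$ is a real symmetric tridiagonal $(N+1)\times(N+1)$ matrix $J$ with diagonal entries $a_0,\dots,a_N\in\mathbb{R}$ and off-diagonal entries $b_0,\dots,b_{N-1}>0$. It is persymmetric if $a_k=a_{N-k}$ for $k=0,\dots,N$ and $b_l=b_{N-1-l}$ for $l=0,\dots,N-1$. Let $\mathbf{e}_0,\dots,\mathbf{e}_N$ be the standard basis of $\mathbb{C}^{N+1}$. $J$ realizes perfect state transfer (PST) at time $T>0$ if $e^{-iTJ}\mathbf{e}_0=e^{i\phi}\mathbf{e}_N$ for some $\phi\in\mathbb{R}$. If $T_0$ is the earliest (smallest positive) such time, $J$ is said to have Early State Exclusion (ESE) at time $t$ if $0<t<T_0$ and $(e^{-iJt}\mathbf{e}_0,\mathbf{e}_0)_{\mathbb{C}^{N+1}}=0$. *)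

From HB Require Import structures.
From mathcomp Require Import all_boot all_order all_algebra.
From mathcomp Require Import complex.
From mathcomp Require Import all_classical all_reals all_analysis.
Set Implicit Arguments. Unset Strict Implicit. Unset Printing Implicit Defensive.
Import Order.TTheory GRing.Theory Num.Theory ComplexField.
Import numFieldNormedType.Exports.
Local Open Scope ring_scope.
Local Open Scope complex_scope.

Definition expmx (R : realType) (n : nat) (A : 'M[R[i]]_n.+1) : 'M[R[i]]_n.+1 :=
  limn (fun m : nat => \sum_(k < m) ((k`!)%:R^-1 : R[i]) *: A ^+ k).

Definition jacobi (R : realType) (N : nat) (a b : nat -> R) : 'M[R]_N.+1 :=
  \matrix_(i, j) (if i == j then a i
                  else if (j : nat) == i.+1 then b i
                  else if (i : nat) == j.+1 then b j
                  else 0).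

Definition jacobi_params (R : realType) (N : nat) (a b : nat -> R) : Prop :=
  forall l, (l < N)%N -> 0 < b l.

Definition persymmetric_params (R : realType) (N : nat) (a b : nat -> R) : Prop :=
  (forall k, (k <= N)%N -> a k = a (N - k)%N) /\
  (forall l, (l < N)%N -> b l = b (N.-1 - l)%N).

Definition cmx (R : realType) (N : nat) (J : 'M[R]_N.+1) : 'M[R[i]]_N.+1 :=
  map_mx (fun x : R => x%:C) J.

Definition evec {R : realType} {N : nat} (k : 'I_N.+1) : 'cV[R[i]]_N.+1 :=
  delta_mx k 0.

Definition cinner (R : realType) (N : nat) (u v : 'cV[R[i]]_N.+1) : R[i] :=
  \sum_i u i 0 * (v i 0)^*.

Definition evol (R : realType) (N : nat) (J : 'M[R]_N.+1) (t : R) : 'M[R[i]]_N.+1 :=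
  expmx ((- 'i * t%:C) *: cmx J).

Definition PST_at (R : realType) (N : nat) (J : 'M[R]_N.+1) (T : R) : Prop :=
  0 < T /\ exists phi : R,
    evol J T *m evec 0 = (cos phi +i* sin phi) *: evec ord_max.

Definition earliest_PST (R : realType) (N : nat) (J : 'M[R]_N.+1) (T0 : R) : Prop :=
  PST_at J T0 /\ forall T, PST_at J T -> T0 <= T.

Definition ESE_at (R : realType) (N : nat) (J : 'M[R]_N.+1) (T0 t : R) : Prop :=
  0 < t /\ t < T0 /\ cinner (evol J t *m evec 0) (evec 0) = 0.

From HB Require Import structures.
From mathcomp Require Import all_boot all_order all_algebra.
From mathcomp Require Import complex.
From mathcomp Require Import all_classical all_reals all_analysis.
From mathcomp Require Import zify ring.
Import Order.TTheory GRing.Theory Num.Theory.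
Import numFieldTopology.Exports numFieldNormedType.Exports ComplexField.
Local Open Scope ring_scope.

(* Write J = sum_j lambda_j P_j, where P_j = L_j(J) and L_j are the Lagrange basis
   polynomials of the spectrum, so that e^{-itJ} = sum_j e^{-it lambda_j} P_j.  Since J is
   tridiagonal, (P_j)_{N0} only sees the leading coefficient of L_j; for lambda_j = l0 + j d
   it equals (-1)^(N-j) w_j with w_j = b_0 ... b_{N-1} / (d^N j! (N-j)!).  Perfect state
   transfer at T0 forces |(P_j)_{00}| = |(P_j)_{N0}|, hence (P_j)_{00} = w_j (a diagonal entry
   of a symmetric idempotent is nonnegative) and P_j e_N = (-1)^(N-j) P_j e_0.  An exclusion at
   time t reads sum_j e^{-it lambda_j} w_j = 0; as w_j is proportional to binom(N, j), this is
   (1 + z)^N = 0 for z = e^{-itd}, so z = -1, and then e^{-itJ} e_0 = (-1)^N e^{-it l0} e_N is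
   a perfect state transfer at a time t < T0. *)

Section SpectralProjectors.
Context {R : fieldType} {n : nat}.
Variables (A : 'M[R]_n.+1) (lam : 'I_n.+1 -> R).
Hypothesis lam_inj : injective lam.
Hypothesis eigenvalue_lam : forall i, eigenvalue A (lam i).

Definition lagrange_num (j : 'I_n.+1) : {poly R} :=
  \prod_(i < n.+1 | i != j) ('X - (lam i)%:P).
Definition lagrange_den (j : 'I_n.+1) : R := \prod_(i < n.+1 | i != j) (lam j - lam i).
Definition lagrange_poly (j : 'I_n.+1) : {poly R} := (lagrange_den j)^-1 *: lagrange_num j.
Definition spectral_proj (j : 'I_n.+1) : 'M[R]_n.+1 := horner_mx A (lagrange_poly j).

Lemma char_poly_spectrum : char_poly A = \prod_i ('X - (lam i)%:P).
Proof.
set s := [seq lam i | i <- enum 'I_n.+1].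
have roots_s : all (root (char_poly A)) s.
  by apply/allP => _ /mapP [i _ ->]; rewrite -eigenvalue_root_char.
have uniq_s : uniq_roots s by rewrite uniq_rootsE map_inj_uniq ?enum_uniq.
have size_s : size (\prod_(x <- s) ('X - x%:P)) = n.+2.
  by rewrite size_prod_XsubC size_map size_enum_ord.
move: size_s (uniq_roots_dvdp roots_s uniq_s); rewrite big_map big_enum /=.
move=> size_s dvd_s; apply/eqP.
rewrite -eqp_monic ?char_poly_monic ?monic_prod_XsubC // eqp_sym.
by rewrite -dvdp_size_eqp // size_char_poly size_s.
Qed.

Lemma lagrange_den_neq0 j : lagrange_den j != 0.
Proof. by apply/prodf_neq0 => i; rewrite subr_eq0 eq_sym (inj_eq lam_inj). Qed.

Lemma horner_lagrange_poly j i : (lagrange_poly j).[lam i] = (i == j)%:R.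
Proof.
rewrite hornerZ /lagrange_num horner_prod; have [->|neq_ij] := eqVneq i j.
  by under eq_bigr do rewrite hornerXsubC; rewrite mulVf ?lagrange_den_neq0.
by rewrite (bigD1 i) //= hornerXsubC subrr mul0r mulr0.
Qed.

Lemma size_lagrange_num j : size (lagrange_num j) = n.+1.
Proof.
rewrite size_prod => [|i _]; last by rewrite polyXsubC_eq0.
rewrite (eq_bigr (fun=> 2%N)) => [|i _]; last by rewrite size_XsubC.
by rewrite sum_nat_const cardC1 card_ord /=; lia.
Qed.

Lemma lead_coef_lagrange_poly j : lead_coef (lagrange_poly j) = (lagrange_den j)^-1.
Proof. by rewrite lead_coefZ (monicP (monic_prod_XsubC _ _ _)) mulr1. Qed.

Lemma size_lagrange_poly j : size (lagrange_poly j) = n.+1.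
Proof. by rewrite size_scale ?invr_eq0 ?lagrange_den_neq0 ?size_lagrange_num. Qed.

Lemma sum_lagrange_poly : \sum_j lagrange_poly j = 1.
Proof.
apply/eqP; rewrite -subr_eq0; apply/eqP.
apply: (@roots_geq_poly_eq0 _ _ [seq lam i | i <- enum 'I_n.+1]).
- apply/allP => _ /mapP [i _ ->]; rewrite /root !hornerE horner_sum (bigD1 i) //=.
  rewrite big1 => [|k /negPf ki]; rewrite horner_lagrange_poly ?eqxx ?addr0 ?subrr //.
  by rewrite eq_sym ki.
- by rewrite map_inj_uniq ?enum_uniq.
rewrite size_map size_enum_ord (leq_trans (size_polyD _ _)) // geq_max size_polyN.
rewrite size_poly1 andbT; elim/big_ind: _ => [|p q sp sq|j _].
- by rewrite size_poly0.
- by rewrite (leq_trans (size_polyD _ _)) // geq_max sp sq.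
- by rewrite size_lagrange_poly.
Qed.

Lemma horner_mx_mul_spectral_proj q j :
  horner_mx A q * spectral_proj j = q.[lam j] *: spectral_proj j.
Proof.
have char_split : char_poly A = ('X - (lam j)%:P) * lagrange_num j.
  by rewrite char_poly_spectrum (bigD1 j).
rewrite {1}(divp_eq q ('X - (lam j)%:P)) modp_XsubC rmorphD rmorphM /= horner_mx_C.
rewrite mulrDl -mulrA /spectral_proj linearZ /= -scalerAr -rmorphM /= -char_split.
by rewrite Cayley_Hamilton scaler0 mulr0 add0r -mulmxE mul_scalar_mx.
Qed.

Lemma spectral_projM i j :
  spectral_proj i * spectral_proj j = (i == j)%:R *: spectral_proj j.
Proof. by rewrite {1}/spectral_proj horner_mx_mul_spectral_proj horner_lagrange_poly eq_sym. Qed.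

Lemma sum_spectral_proj : \sum_j spectral_proj j = 1.
Proof. by rewrite -rmorph_sum sum_lagrange_poly rmorph1. Qed.

Lemma exprn_spectral m : A ^+ m = \sum_j lam j ^+ m *: spectral_proj j.
Proof.
rewrite -[LHS]mulr1 -sum_spectral_proj mulr_sumr; apply: eq_bigr => j _.
by rewrite -[A in A ^+ m]horner_mx_X -rmorphXn horner_mx_mul_spectral_proj hornerXn.
Qed.

End SpectralProjectors.

Lemma horner_mx_tr (R : comNzRingType) n (A : 'M[R]_n.+1) p :
  (horner_mx A p)^T = horner_mx A^T p.
Proof.
elim/poly_ind: p => [|p c IH]; first by rewrite !rmorph0 trmx0.
rewrite !rmorphD !rmorphM /= !horner_mx_X !horner_mx_C linearD /= -!mulmxE trmx_mul IH.
by rewrite tr_scalar_mx; congr (_ + _); apply: comm_mx_horner.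
Qed.

Lemma sym_idempotent_diag_ge0 (R : realDomainType) n (P : 'M[R]_n) i :
  P^T = P -> P *m P = P -> 0 <= P i i.
Proof.
move=> P_sym P_idem; rewrite -P_idem mxE; apply: sumr_ge0 => l _.
by rewrite -[in P l i]P_sym mxE -expr2 sqr_ge0.
Qed.

Section FactorialProducts.
Context {R : comNzRingType}.

Lemma prod_natr_sub m : \prod_(0 <= i < m) (m%:R - i%:R : R) = m`!%:R.
Proof.
elim: m => [|m IH]; first by rewrite big_geq.
rewrite big_nat_recl // subr0 factS natrM -IH; congr (_ * _).
by apply: eq_bigr => i _; rewrite !mulrS opprD addrACA subrr add0r.
Qed.

Lemma prod_natr_sub_shift k m :
  \prod_(0 <= i < m) (k%:R - (i + k.+1)%:R : R) = (-1) ^+ m * m`!%:R.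
Proof.
elim: m => [|m IH]; first by rewrite big_geq // mulr1.
rewrite big_nat_recr //= IH factS natrM exprS addnS -addSn natrD; ring.
Qed.

Lemma prod_natr_sub_neq N (j : 'I_N.+1) :
  \prod_(i < N.+1 | i != j) ((j : nat)%:R - (i : nat)%:R : R) =
  (-1) ^+ (N - j) * (j`! * (N - j)`!)%:R.
Proof.
rewrite (eq_bigl (fun i : 'I_N.+1 => (i : nat) != j)) //.
rewrite -(big_mkord (fun i => i != j) (fun i => (j%:R - i%:R : R))) big_mkcond.
rewrite (@big_cat_nat _ _ _ j) ?(ltnW (ltn_ord j)) //=.
rewrite [\prod_(j <= i < N.+1) _]big_ltn //= eqxx mul1r.
rewrite (eq_big_nat _ _ (F2 := fun i => (j%:R - i%:R : R))) => [|i /andP [_ lt_ij]].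
  rewrite prod_natr_sub (eq_big_nat _ _ (F2 := fun i => (j%:R - i%:R : R))).
    by rewrite -{1}(add0n j.+1) big_addn subSS prod_natr_sub_shift natrM; ring.
  by move=> i /andP [lt_ji _]; rewrite ifT //; apply/eqP; lia.
by rewrite ifT //; apply/eqP; lia.
Qed.

End FactorialProducts.

Lemma arith_progression_of_gaps (R : pzRingType) N (x : 'I_N.+1 -> R) (d : R) :
  (forall k, (k < N)%N -> x (inord k.+1) - x (inord k) = d) ->
  forall j : 'I_N.+1, x j = x (inord 0) + (j : nat)%:R * d.
Proof.
move=> gap j; rewrite -[j in LHS]inord_val; elim: (j : nat) (leq_ord j) => [|k IH] le_kN.
  by rewrite mul0r addr0.
rewrite -(subrK (x (inord k)) (x (inord k.+1))) gap // IH 1?ltnW //.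
by rewrite addrCA mulrSr mulrDl mul1r [d + _]addrC.
Qed.

Section Jacobi.
Context {R : realType} {N : nat}.
Variables a b : nat -> R.
Local Notation J := (jacobi N a b).

Lemma jacobi_tr : J^T = J.
Proof.
apply/matrixP => i j; rewrite !mxE; have [->|neq_ij] := eqVneq i j => //.
by do 2 case: eqP => //; lia.
Qed.

Lemma jacobi_expr_col0 m (i : 'I_N.+1) : (m < i)%N -> (J ^+ m) i 0 = 0.
Proof.
elim: m i => [|m IH] i lt_mi; first by rewrite expr0 mxE -val_eqE /= gtn_eqF.
rewrite exprS -mulmxE mxE big1 // => l _; have [lt_ml|le_lm] := ltnP m l.
  by rewrite IH ?mulr0.
by rewrite mxE -val_eqE /= !ifN ?mul0r //; apply/eqP; lia.
Qed.

Lemma jacobi_expr_col0_diag m : (m <= N)%N -> (J ^+ m) (inord m) 0 = \prod_(l < m) b l.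
Proof.
elim: m => [|m IH] le_mN.
  by rewrite expr0 big_ord0 mxE -val_eqE /= inordK.
have le_m1N := ltnW le_mN.
rewrite exprS -mulmxE mxE (bigD1 (inord m)) //= [X in _ + X]big1 => [|l neq_lm].
  rewrite addr0 IH // mxE -val_eqE /= !inordK // gtn_eqF // ltn_eqF // eqxx.
  by rewrite big_ord_recr /= mulrC.
have [lt_ml|le_lm] := ltnP m l; first by rewrite jacobi_expr_col0 ?mulr0.
have lt_lm : (l < m)%N.
  by rewrite ltn_neqAle le_lm andbT; apply: contra neq_lm => /eqP <-; rewrite inord_val.
by rewrite mxE -val_eqE /= inordK ?ifN ?mul0r //; apply/eqP; lia.
Qed.

Lemma horner_jacobi_last0 (p : {poly R}) : (size p <= N.+1)%N ->
  (horner_mx J p) ord_max 0 = p`_N * \prod_(l < N) b l.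
Proof.
move=> size_p; have p_expand : p = \sum_(i < N.+1) p`_i *: 'X^i.
  rewrite -poly_def; apply/polyP => i; rewrite coef_poly; case: ltnP => // le_Ni.
  by rewrite nth_default // (leq_trans size_p).
rewrite {1}p_expand rmorph_sum summxE big_ord_recr /= big1 ?add0r => [|i _].
  rewrite linearZ rmorphXn /= horner_mx_X mxE (_ : ord_max = inord N).
    by rewrite jacobi_expr_col0_diag.
  by apply: val_inj; rewrite /= inordK.
by rewrite linearZ rmorphXn /= horner_mx_X mxE jacobi_expr_col0 ?mulr0.
Qed.

End Jacobi.

Local Open Scope classical_set_scope.
Local Open Scope complex_scope.

Definition expi {R : realType} (x : R) : R[i] := cos x +i* sin x.

Section ComplexExponential.
Context {R : realType}.
(* Convergence in R[i] is taken in its normed structure as a numFieldType. *)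
Local Notation C := (R[i] : numFieldType).
Implicit Types x y : R.

Lemma expiD x y : expi (x + y) = expi x * expi y.
Proof. by rewrite /expi cosD sinD; congr (_ +i* _); ring. Qed.

Lemma expi0 : expi (0 : R) = 1.
Proof. by rewrite /expi cos0 sin0. Qed.

Lemma expiMn x k : expi (k%:R * x) = expi x ^+ k.
Proof. by elim: k => [|k IH]; rewrite ?mul0r ?expi0 // mulrSr mulrDl mul1r expiD IH exprSr. Qed.

Lemma expi_pi : expi (pi : R) = -1.
Proof. by rewrite /expi cospi sinpi complexr0 rmorphN1. Qed.

Lemma norm_expi x : `|expi x| = 1.
Proof. by rewrite normc_def /= cos2Dsin2 sqrtr1. Qed.

Lemma norm_real_complex x : `|x%:C| = `|x|%:C.
Proof. by rewrite normc_def /= expr0n /= addr0 sqrtr_sqr. Qed.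

Lemma expi_neq0 x : expi x != 0.
Proof. by rewrite -normr_eq0 norm_expi oner_eq0. Qed.

Lemma cvg_complex_real (u : nat -> R) (l : R) :
  u @ \oo --> l -> (fun k => (u k)%:C : C) @ \oo --> (l%:C : C).
Proof.
move=> /cvgrPdist_lt u_l; apply/cvgrPdist_lt => e e_gt0.
have e_real : e \is Num.real by apply: gtr0_real.
have Re_e_gt0 : 0 < complex.Re e by rewrite -ltcR RRe_real.
near=> k; rewrite -(RRe_real e_real) -rmorphB normc_def /= expr0n /= addr0 sqrtr_sqr ltcR.
by near: k; apply: u_l.
Unshelve. all: end_near.
Qed.

Lemma exp_series_term_i x k :
  (k`!%:R^-1 : R[i]) * ('i * x%:C) ^+ k = (cos_coeff x k)%:C + 'i * (sin_coeff x k)%:C.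
Proof.
have i_pow : 'i ^+ k = 'i ^+ odd k * (-1) ^+ k./2 :> R[i].
  by rewrite -sqr_i -exprM -exprD mul2n odd_double_half.
rewrite /cos_coeff /sin_coeff /= exprMn i_pow.
rewrite !rmorphM /= !rmorphXn /= fmorphV /= !rmorph_nat /= rmorphN1.
case: (boolP (odd k)) => [odd_k|_] /=; last by ring.
have -> : k.-1./2 = k./2 by rewrite -{1}(odd_double_half k) odd_k /= doubleK.
by ring.
Qed.

Lemma cvg_exp_series_i x :
  (fun m => \sum_(k < m) (k`!%:R^-1 : C) * ('i * x%:C) ^+ k)
    @ \oo --> (expi x : C).
Proof.
have cos_x : series (cos_coeff x) @ \oo --> cos x.
  by rewrite cos.unlock; exact: is_cvg_series_cos_coeff.
have sin_x : series (sin_coeff x) @ \oo --> sin x.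
  by rewrite sin.unlock; exact: is_cvg_series_sin_coeff.
suff -> : (fun m => \sum_(k < m) (k`!%:R^-1 : C) * ('i * x%:C) ^+ k) =
    (fun m => (series (cos_coeff x) m)%:C + 'i * (series (sin_coeff x) m)%:C).
  rewrite [expi x]complexE.
  apply: cvgD; first exact: cvg_complex_real.
  by apply: cvgM; [exact: cvg_cst | exact: cvg_complex_real].
apply: funext => m; rewrite /series /= !big_mkord !rmorph_sum /= mulr_sumr -big_split /=.
by apply: eq_bigr => k _; rewrite exp_series_term_i.
Qed.

End ComplexExponential.

Section Evolution.
Context {R : realType} {n : nat} {A : 'M[R]_n.+1}.
Context {lam : 'I_n.+1 -> R} {P : 'I_n.+1 -> 'M[R]_n.+1}.
Local Notation C := (R[i] : numFieldType).
Hypothesis A_exprn : forall m, A ^+ m = \sum_j lam j ^+ m *: P j.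

Lemma cmx_exprn m : cmx A ^+ m = \sum_j (lam j)%:C ^+ m *: cmx (P j).
Proof.
rewrite -(rmorphXn (map_mx (real_complex R))) A_exprn raddf_sum.
by apply: eq_bigr => j _; rewrite -(rmorphXn (real_complex R)); apply: map_mxZ.
Qed.

Lemma evol_spectral t : evol A t = \sum_j expi (- (t * lam j)) *: cmx (P j).
Proof.
have partial_sums m :
    \sum_(k < m) (k`!%:R^-1 : R[i]) *: ((- 'i * t%:C) *: cmx A) ^+ k =
    \sum_j (\sum_(k < m) (k`!%:R^-1 : R[i]) * ('i * (- (t * lam j))%:C) ^+ k) *: cmx (P j).
  under eq_bigr do rewrite exprZn cmx_exprn !scaler_sumr.
  rewrite exchange_big /=; apply: eq_bigr => j _; rewrite scaler_suml.
  apply: eq_bigr => k _; rewrite !scalerA -mulrA -exprMn rmorphN rmorphM /=.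
  by congr (_ * (_ ^+ _) *: _); ring.
rewrite /evol /expmx (funext partial_sums).
have : (fun m => \sum_j (\sum_(k < m) (k`!%:R^-1 : C) * ('i * (- (t * lam j))%:C) ^+ k) *: cmx (P j)
    : 'M[C]_n.+1) @ \oo --> (\sum_j expi (- (t * lam j)) *: cmx (P j) : 'M[C]_n.+1).
  apply: cvg_big => [|j _]; first exact: add_continuous.
  by apply: cvgZ; [exact: cvg_exp_series_i | exact: cvg_cst].
exact: cvg_lim.
Qed.

End Evolution.

Lemma mulmx_evec (R : realType) n (M : 'M[R[i]]_n.+1) (k i : 'I_n.+1) :
  (M *m evec k) i 0 = M i k.
Proof.
rewrite mxE (bigD1 k) //= big1 ?addr0 => [|l neq_lk]; first by rewrite mxE !eqxx mulr1.
by rewrite mxE (negPf neq_lk) mulr0.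
Qed.

Lemma cinner_evec0 (R : realType) n (u : 'cV[R[i]]_n.+1) : cinner u (evec 0) = u 0 0.
Proof.
rewrite /cinner (bigD1 0) //= big1 ?addr0 => [|i neq_i0].
  by rewrite mxE !eqxx conjC_nat mulr1.
by rewrite mxE (negPf neq_i0) conjC_nat mulr0.
Qed.

Section EquallySpacedSpectrum.
Context {R : realType} {N : nat} {a b : nat -> R} {lam : 'I_N.+1 -> R} {l0 d : R}.
Local Notation J := (jacobi N a b).
Hypothesis eigenvalue_lam : forall j, eigenvalue J (lam j).
Hypothesis b_gt0 : forall l, (l < N)%N -> 0 < b l.
Hypothesis d_gt0 : 0 < d.
Hypothesis lam_arith : forall j : 'I_N.+1, lam j = l0 + (j : nat)%:R * d.
Local Notation P := (spectral_proj J lam).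

Definition spectral_weight (j : 'I_N.+1) : R :=
  \prod_(l < N) b l / (d ^+ N * (j`! * (N - j)`!)%:R).

Lemma prod_offdiag_gt0 : 0 < \prod_(l < N) b l.
Proof. by apply: prodr_gt0 => l _; apply: b_gt0. Qed.

Lemma spectral_weight_gt0 j : 0 < spectral_weight j.
Proof. by rewrite divr_gt0 ?prod_offdiag_gt0 ?mulr_gt0 ?exprn_gt0 ?ltr0n ?muln_gt0 ?fact_gt0. Qed.

Lemma arith_spectrum_inj : injective lam.
Proof.
move=> i j; rewrite !lam_arith => /addrI /(mulIf (lt0r_neq0 d_gt0)) /eqP.
by rewrite eqr_nat => /eqP /val_inj.
Qed.

Lemma lagrange_den_arith j :
  lagrange_den lam j = d ^+ N * ((-1) ^+ (N - j) * (j`! * (N - j)`!)%:R).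
Proof.
rewrite /lagrange_den (eq_bigr (fun i : 'I_N.+1 => ((j : nat)%:R - (i : nat)%:R) * d)).
  by rewrite big_split /= prod_natr_sub_neq prodr_const cardC1 card_ord mulrC.
by move=> i _; rewrite !lam_arith; ring.
Qed.

Lemma spectral_proj_last0 j : P j ord_max 0 = (-1) ^+ (N - j) * spectral_weight j.
Proof.
have size_L := size_lagrange_poly _ arith_spectrum_inj j.
rewrite /spectral_proj horner_jacobi_last0 ?size_L //.
have -> : (lagrange_poly lam j)`_N = lead_coef (lagrange_poly lam j) by rewrite lead_coefE size_L.
rewrite lead_coef_lagrange_poly lagrange_den_arith /spectral_weight.
by rewrite !invfM invr_sign; ring.
Qed.

Let projM := spectral_projM J lam arith_spectrum_inj eigenvalue_lam.
Let evolE := evol_spectral (exprn_spectral J lam arith_spectrum_inj eigenvalue_lam).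

Lemma spectral_proj_tr j : (P j)^T = P j.
Proof. by rewrite /spectral_proj horner_mx_tr jacobi_tr. Qed.

Lemma spectral_proj00_ge0 j : 0 <= P j 0 0.
Proof.
apply: sym_idempotent_diag_ge0; first exact: spectral_proj_tr.
by rewrite mulmxE projM eqxx scale1r.
Qed.

Local Notation cP j := (cmx (P j)).

Lemma spectral_proj_evol T j : cP j *m evol J T = expi (- (T * lam j)) *: cP j.
Proof.
have cmx_projM k : cP j *m cP k = (j == k)%:R *: cP k.
  rewrite -(map_mxM (real_complex R)) mulmxE projM.
  by case: eqP => _; rewrite ?scale1r // !scale0r (map_mx0 (real_complex R)).
rewrite evolE mulmx_sumr.
rewrite (bigD1 j) //= big1 => [|k neq_kj]; rewrite -scalemxAr cmx_projM.
  by rewrite eqxx scale1r addr0.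
by rewrite eq_sym (negPf neq_kj) scale0r scaler0.
Qed.

Section PerfectStateTransfer.
Context {T0 phi : R}.
Hypothesis pst : evol J T0 *m evec 0 = expi phi *: evec ord_max.

Lemma pst_spectral_proj j :
  expi (- (T0 * lam j)) *: (cP j *m evec 0) = expi phi *: (cP j *m evec ord_max).
Proof. by rewrite scalemxAl -spectral_proj_evol -mulmxA pst scalemxAr. Qed.

Lemma pst_spectral_proj00 j : expi (- (T0 * lam j)) * (P j 0 0)%:C =
  expi phi * ((-1) ^+ (N - j) * spectral_weight j)%:C.
Proof.
have := congr1 (fun v : 'cV_N.+1 => v 0 0) (pst_spectral_proj j).
rewrite /= [LHS]mxE [RHS]mxE !mulmx_evec !mxE => ->.
by rewrite -spectral_proj_last0 -[in P j 0 ord_max]spectral_proj_tr mxE.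
Qed.

Lemma spectral_proj00 j : P j 0 0 = spectral_weight j.
Proof.
have := congr1 Num.norm (pst_spectral_proj00 j).
rewrite !normrM !norm_expi !mul1r !norm_real_complex normrM normrX normrN1 expr1n mul1r.
case; rewrite !ger0_norm ?spectral_proj00_ge0 //; exact/ltW/spectral_weight_gt0.
Qed.

Lemma expi_pst j : expi (- (T0 * lam j)) = expi phi * ((-1) ^+ (N - j))%:C.
Proof.
have w_neq0 : (spectral_weight j)%:C != 0 by rewrite fmorph_eq0 gt_eqF ?spectral_weight_gt0.
apply: (mulIf w_neq0); rewrite -spectral_proj00 pst_spectral_proj00 spectral_proj00.
by rewrite rmorphM mulrA.
Qed.

Lemma pst_spectral_proj_last j :
  cP j *m evec ord_max = ((-1) ^+ (N - j))%:C *: (cP j *m evec 0).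
Proof.
apply: (scalerI (expi_neq0 phi)); rewrite -pst_spectral_proj expi_pst.
by rewrite scalerA.
Qed.

Section EarlyStateExclusion.
Context {t : R}.
Hypothesis N_gt0 : (0 < N)%N.
Hypothesis ese : cinner (evol J t *m evec 0) (evec 0) = 0.

Lemma ese_weighted_sum : \sum_j expi (- (t * lam j)) * (spectral_weight j)%:C = 0.
Proof.
rewrite -[RHS]ese cinner_evec0 mulmx_evec evolE.
by rewrite summxE; apply: eq_bigr => j _; rewrite !mxE spectral_proj00.
Qed.

Lemma expi_lam j : expi (- (t * lam j)) = expi (- (t * l0)) * expi (- (t * d)) ^+ j.
Proof. by rewrite lam_arith -expiMn -expiD; congr expi; ring. Qed.

Lemma spectral_weight_binomial j :
  spectral_weight j = 'C(N, j)%:R * (\prod_(l < N) b l / (d ^+ N * N`!%:R)).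
Proof.
rewrite /spectral_weight -(bin_fact (leq_ord j)) !natrM.
have d_neq0 : d ^+ N != 0 by rewrite expf_neq0 ?lt0r_neq0.
field; rewrite d_neq0 !pnatr_eq0 -!lt0n ?bin_gt0 ?leq_ord ?fact_gt0 //.
Qed.

Lemma ese_expi_gap : expi (- (t * d)) = -1.
Proof.
set z := expi (- (t * d)); set c := \prod_(l < N) b l / (d ^+ N * N`!%:R).
have : expi (- (t * l0)) * c%:C * (z + 1) ^+ N = 0.
  rewrite -[RHS]ese_weighted_sum exprD1n !mulr_sumr; apply: eq_bigr => j _.
  rewrite expi_lam spectral_weight_binomial -/c -/z [X in _ = _ * X]rmorphM /= rmorph_nat.
  by rewrite -mulr_natr; ring.
have c_gt0 : 0 < c by rewrite divr_gt0 ?prod_offdiag_gt0 ?mulr_gt0 ?exprn_gt0 ?ltr0n ?fact_gt0.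
move/eqP; rewrite !mulf_eq0 expf_eq0 N_gt0 (negPf (expi_neq0 _)) fmorph_eq0 gt_eqF //=.
by rewrite addr_eq0 => /eqP.
Qed.

Lemma ese_transfer : evol J t *m evec 0 = expi (- (t * l0) + N%:R * pi) *: evec ord_max.
Proof.
have sum_cP : \sum_j cP j = 1.
  rewrite -raddf_sum (sum_spectral_proj J _ arith_spectrum_inj).
  exact: (map_mx1 (real_complex R)).
rewrite evolE mulmx_suml.
rewrite (eq_bigr (fun j => (expi (- (t * l0)) * (-1) ^+ N) *: (cP j *m evec ord_max))).
  by rewrite -scaler_sumr -mulmx_suml sum_cP mul1mx expiD expiMn expi_pi.
move=> j _; rewrite -scalemxAl expi_lam ese_expi_gap pst_spectral_proj_last scalerA.
rewrite rmorph_sign -mulrA; congr (_ * _ *: _).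
by rewrite -[in (-1) ^+ N](subnKC (leq_ord j)) exprD -mulrA -expr2 sqrr_sign mulr1.
Qed.

End EarlyStateExclusion.

End PerfectStateTransfer.

End EquallySpacedSpectrum.

Theorem mainTheorem3 (R : realType) (N : nat) (a b : nat -> R)
  (lambda : 'I_N.+1 -> R) :
  (1 <= N)%N ->
  jacobi_params N a b ->
  persymmetric_params N a b ->
  (exists T : R, PST_at (jacobi N a b) T) ->
  (forall i j : 'I_N.+1, (i < j)%N -> lambda i < lambda j) ->
  (forall x : R, eigenvalue (jacobi N a b) x <-> exists i, x = lambda i) ->
  (forall k : nat, (k < N)%N ->
      lambda (inord k.+1) - lambda (inord k) = lambda (inord 1) - lambda (inord 0)) ->
  forall T0 : R, earliest_PST (jacobi N a b) T0 ->
  ~ (exists t : R, ESE_at (jacobi N a b) T0 t).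
Proof.
move=> N_gt0 b_gt0 _ _ lambda_incr lambda_spec /arith_progression_of_gaps lambda_arith.
move=> T0 [[_ [phi pst]] T0_min] [t [t_gt0 [lt_tT0 ese]]].
have d_gt0 : 0 < lambda (inord 1) - lambda (inord 0) by rewrite subr_gt0 lambda_incr ?inordK.
have eig j : eigenvalue (jacobi N a b) (lambda j) by apply/lambda_spec; exists j.
have pst_t : PST_at (jacobi N a b) t.
  split=> //; exists (- (t * lambda (inord 0)) + N%:R * pi).
  exact: (ese_transfer eig b_gt0 d_gt0 lambda_arith pst N_gt0 ese).
by have := T0_min t pst_t; rewrite leNgt lt_tT0.
Qed.
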